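(* The functor $\widetilde S:\mathbf{Gpd}\to(q\mathbf{ASmd})_0$ is fully faithful; that is, for groupoids $\mathcal K,\mathcal H$ the map $F\mapsto\widetilde S(F)$ is a bijection from the set of functors $\mathcal K\to\mathcal H$ onto the set of morphisms of quasi-schemoids $\widetilde S(\mathcal K)\to\widetilde S(\mathcal H)$ that send base points to base points.
   Context: Write $s(f),t(f)$ for source and target. A quasi-schemoid is a pair $(\mathcal C,S)$ with $\mathcal C$ a small category and $S$ a partition of $mor(\mathcal C)$ into nonempty blocks such that for all $\sigma,\tau,\mu\in S$ and $f,g\in\mu$ the sets $\{(a,b)\in\sigma\times\tau: s(a)=t(b), a\circ b=f\}$ and the analogous set for $g$ have equal cardinality. A morphism of quasi-schemoids $F:(\mathcal C,S)\to(\mathcal E,S')$ is a functor such that each $F(\sigma)$, $\sigma\in S$, lies in some block of $S'$. $(q\mathbf{ASmd})_0$ is the category of based quasi-schemoids: quasi-schemoids together with a subset $\mathcal C^\circ\subseteq ob(\mathcal C)$ of base points, with morphisms the morphisms of quasi-schemoids $F$ with $F(\mathcal C^\circ)\subseteq\mathcal E^\circ$. $\mathbf{Gpd}$ is the category of groupoids and functors. For a groupoid $\mathcal H$, $\widetilde S(\mathcal H)$ is the quasi-schemoid with underlying category $\widetilde{\mathcal H}$: $ob(\widetilde{\mathcal H})=mor(\mathcal H)$, $\mathrm{Hom}_{\widetilde{\mathcal H}}(g,h)=\{(h,g)\}$ if $t(h)=t(g)$ and empty otherwise, composition $(k,h)\circ(h,g)=(k,g)$; partition $\{\mathcal G_f\}_{f\in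 mor(\mathcal H)}$ with $\mathcal G_f=\{(k,l):k^{-1}l=f\}$; base points $\{1_x: x\in ob(\mathcal H)\}$. For a functor $F$, $\widetilde S(F)(f)=F(f)$, $\widetilde S(F)(f,g)=(F(f),F(g))$. *)

From Stdlib Require Import Logic.EqdepFacts.
Set Implicit Arguments.

Record Cat := mkCat {
  Ob : Type;
  Hom : Ob -> Ob -> Type;
  idm : forall x, Hom x x;
  comp : forall x y z, Hom y z -> Hom x y -> Hom x z;
  comp_id_l : forall x y (f : Hom x y), comp (idm y) f = f;
  comp_id_r : forall x y (f : Hom x y), comp f (idm x) = f;
  comp_assoc : forall x y z w (h : Hom z w) (g : Hom y z) (f : Hom x y),
      comp h (comp g f) = comp (comp h g) f
}.
Arguments idm {c} x.
Arguments comp {c x y z} _ _.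

Record Arr (C : Cat) := mkArr { asrc : Ob C; atgt : Ob C; ahom : Hom C asrc atgt }.
Arguments mkArr {C} asrc atgt ahom.

Record Functor (C D : Cat) := mkFunctor {
  fob : Ob C -> Ob D;
  fmor : forall x y, Hom C x y -> Hom D (fob x) (fob y);
  fmor_id : forall x, fmor x x (idm x) = idm (fob x);
  fmor_comp : forall x y z (g : Hom C y z) (f : Hom C x y),
      fmor x z (comp g f) = comp (fmor y z g) (fmor x y f)
}.
Arguments fob {C D} _ _.
Arguments fmor {C D} _ {x y} _.

Definition arr_map C D (F : Functor C D) (f : Arr C) : Arr D :=
  mkArr (fob F (asrc f)) (fob F (atgt f)) (fmor F (ahom f)).

Record Gpd := mkGpd {
  gcat :> Cat;
  ginv : forall x y, Hom gcat x y -> Hom gcat y x;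
  ginv_l : forall x y (f : Hom gcat x y), comp (ginv x y f) f = idm x;
  ginv_r : forall x y (f : Hom gcat x y), comp f (ginv x y f) = idm y
}.
Arguments ginv {g x y} _.

Definition equipotent (A B : Type) : Prop :=
  exists (u : A -> B) (v : B -> A),
    (forall a, v (u a) = a) /\ (forall b, u (v b) = b).

Definition is_partition (C : Cat) (S : (Arr C -> Prop) -> Prop) : Prop :=
  (forall s, S s -> exists f, s f) /\
  (forall f, exists s, S s /\ s f) /\
  (forall s t f, S s -> S t -> s f -> t f -> forall g, s g <-> t g).

Definition comp_fiber (C : Cat) (s t : Arr C -> Prop) (f : Arr C) : Type :=
  { p : Arr C * Arr C |
    s (fst p) /\ t (snd p) /\
    exists (x y z : Ob C) (a : Hom C y z) (b : Hom C x y),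
      fst p = mkArr y z a /\ snd p = mkArr x y b /\ f = mkArr x z (comp a b) }.

Record BQS := mkBQS {
  qcat : Cat;
  qpart : (Arr qcat -> Prop) -> Prop;
  qbase : Ob qcat -> Prop
}.

Definition is_quasi_schemoid (X : BQS) : Prop :=
  is_partition (qpart X) /\
  forall s t m f g, qpart X s -> qpart X t -> qpart X m -> m f -> m g ->
    equipotent (comp_fiber s t f) (comp_fiber s t g).

Definition is_bqs_morphism (X Y : BQS) (F : Functor (qcat X) (qcat Y)) : Prop :=
  (forall s, qpart X s -> exists t, qpart Y t /\ forall f, s f -> t (arr_map F f)) /\
  (forall x, qbase X x -> qbase Y (fob F x)).

(* Hom_{H~}(g,h) = {(h,g)} if t(h) = t(g), empty otherwise: represented by the
   (proof-irrelevant) proposition t(h) = t(g). *)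
Definition tildeHom (H : Gpd) (g h : Arr H) : Type := atgt h = atgt g.

Definition tildeCat (H : Gpd) : Cat.
Proof.
  refine (@mkCat (Arr H) (@tildeHom H) (fun g => eq_refl)
            (fun g h k (q : atgt k = atgt h) (p : atgt h = atgt g) => eq_trans q p)
            _ _ _).
  - intros x y f; apply eq_trans_refl_l.
  - intros x y f; apply eq_trans_refl_r.
  - intros x y z w h g f; apply eq_trans_assoc.
Defined.

(* G_f = {(k,l) : k^{-1} l = f}; an arrow of H~ from l to k is the pair (k,l) *)
Definition tildeBlock (H : Gpd) (f : Arr H) (m : Arr (tildeCat H)) : Prop :=
  exists (a b c : Ob H) (k : Hom H a c) (l : Hom H b c),
    asrc m = mkArr b c l /\ atgt m = mkArr a c k /\
    f = mkArr b a (comp (ginv k) l).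

Definition tildeS (H : Gpd) : BQS :=
  @mkBQS (tildeCat H)
    (fun s => exists f : Arr H, s = tildeBlock f)
    (fun g => exists x : Ob H, g = mkArr x x (idm x)).

Definition tildeF {K H : Gpd} (F : Functor K H) : Functor (tildeCat K) (tildeCat H).
Proof.
  refine (@mkFunctor (tildeCat K) (tildeCat H) (arr_map F)
            (fun g h (p : atgt h = atgt g) => f_equal (fob F) p : @tildeHom H (arr_map F g) (arr_map F h))
            _ _).
  - intros x; reflexivity.
  - intros x y z q p; simpl in *. unfold tildeHom in *. simpl. apply eq_trans_map_distr.
Defined.

(* The blocks of S~(H) are G_f = {(k,l) | k^{-1} l = f}; writing [ldiv k l f]
   for "k, l have a common target and k^{-1} l = f", a functor Phi between the
   categories underlying S~(K) and S~(H) is a morphism of quasi-schemoids iff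
   it maps ldiv-triples to ldiv-triples, up to the choice of the new quotient.
   - Functors of groupoids preserve inverses, hence ldiv; this makes S~(F) a
     based morphism.
   - S~(F) records F on all arrows, and F on objects is read off identities;
     hence S~ is faithful.
   - For fullness, let Phi be a based morphism.  Since k = 1_y gives
     1_y^{-1} f = f, and Phi sends identities to identities, the quotient
     chosen by Phi for the block G_f must be Phi(f) itself.  The instances
     (1_y, f, f) and (f^{-1}, 1_x, f) of ldiv then show that Phi(f) goes from
     F(x) to F(y), where F(x) is given by Phi(1_x) = 1_{F(x)}; the instance
     (g, g f, f) yields functoriality.  Since arrows of S~(K) are mere
     propositions, Phi is determined by its object part, so S~(F) = Phi. *)
From Stdlib Require Import Eqdep FunctionalExtensionality ProofIrrelevance
  IndefiniteDescription.

Arguments comp_id_l {c x y} f.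
Arguments comp_id_r {c x y} f.
Arguments comp_assoc {c x y z w} h g f.
Arguments ginv_l {g x y} f.
Arguments ginv_r {g x y} f.
Arguments fmor_comp {C D} f0 {x y z} g f.
Arguments fmor_id {C D} f0 x.

Lemma mkArr_inj (C : Cat) a b (h h' : Hom C a b) :
  mkArr a b h = mkArr a b h' -> h = h'.
Proof.
  intro e. injection e. intro e'. apply inj_pair2 in e'. apply inj_pair2 in e'.
  exact e'.
Qed.

Ltac invert_arr e :=
  injection e; intros; subst;
  repeat match goal with
  | E : existT _ _ _ = existT _ _ _ |- _ => apply inj_pair2 in E; subst
  end.

Section GroupoidFacts.
Variable G : Gpd.

Lemma ginv_unique a c (k : Hom G a c) (g : Hom G c a) :
  comp g k = idm a -> g = ginv k.
Proof.
  intro e. rewrite <- (comp_id_r g), <- (ginv_r k), comp_assoc, e.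
  apply comp_id_l.
Qed.

Lemma ginv_idm a : ginv (idm a : Hom G a a) = idm a.
Proof. symmetry. apply ginv_unique. apply comp_id_l. Qed.

Lemma ginv_ginv a b (f : Hom G a b) : ginv (ginv f) = f.
Proof. symmetry. apply ginv_unique. apply ginv_r. Qed.

Definition ldiv (k l f : Arr G) : Prop :=
  exists a b c (k' : Hom G a c) (l' : Hom G b c),
    l = mkArr b c l' /\ k = mkArr a c k' /\ f = mkArr b a (comp (ginv k') l').

Lemma ldiv_intro {a b c} (k : Hom G a c) (l : Hom G b c) :
  ldiv (mkArr a c k) (mkArr b c l) (mkArr b a (comp (ginv k) l)).
Proof. exists a, b, c, k, l. auto. Qed.

Lemma ldiv_idm_l x y (f : Hom G x y) :
  ldiv (mkArr y y (idm y)) (mkArr x y f) (mkArr x y f).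
Proof.
  pose proof (ldiv_intro (idm y) f) as D. rewrite ginv_idm, comp_id_l in D.
  exact D.
Qed.

Lemma ldiv_idm_r x y (f : Hom G x y) :
  ldiv (mkArr y x (ginv f)) (mkArr x x (idm x)) (mkArr x y f).
Proof.
  pose proof (ldiv_intro (ginv f) (idm x)) as D.
  rewrite ginv_ginv, comp_id_r in D. exact D.
Qed.

Lemma ldiv_comp x y z (g : Hom G y z) (f : Hom G x y) :
  ldiv (mkArr y z g) (mkArr x z (comp g f)) (mkArr x y f).
Proof.
  pose proof (ldiv_intro g (comp g f)) as D.
  rewrite comp_assoc, ginv_l, comp_id_l in D. exact D.
Qed.

Lemma ldiv_idm_l_inv c (l f : Arr G) : ldiv (mkArr c c (idm c)) l f -> f = l.
Proof.
  intros (a & b & c' & k' & l' & el & ek & ef). invert_arr ek.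
  rewrite ginv_idm, comp_id_l. reflexivity.
Qed.

Lemma ldiv_idm_r_inv a (k f : Arr G) : ldiv k (mkArr a a (idm a)) f -> asrc f = a.
Proof.
  intros (a' & b & c' & k' & l' & el & ek & ef). invert_arr el. reflexivity.
Qed.

Lemma ldiv_comp_inv a b c (k : Hom G a c) (l : Hom G b c) (f : Hom G b a) :
  ldiv (mkArr a c k) (mkArr b c l) (mkArr b a f) -> l = comp k f.
Proof.
  intros (a' & b' & c' & k' & l' & el & ek & ef). invert_arr el. invert_arr ek.
  apply mkArr_inj in ef. subst.
  rewrite comp_assoc, ginv_r, comp_id_l. reflexivity.
Qed.

End GroupoidFacts.
Arguments ldiv {G} k l f.

Lemma functor_ginv (K H : Gpd) (F : Functor K H) a c (k : Hom K a c) :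
  fmor F (ginv k) = ginv (fmor F k).
Proof.
  apply ginv_unique. rewrite <- fmor_comp, ginv_l. apply fmor_id.
Qed.

Lemma functor_ldiv {K H : Gpd} (F : Functor K H) (k l f : Arr K) :
  ldiv k l f -> ldiv (arr_map F k) (arr_map F l) (arr_map F f).
Proof.
  intros (a & b & c & k' & l' & el & ek & ef). subst.
  unfold arr_map; simpl. rewrite fmor_comp, functor_ginv. apply ldiv_intro.
Qed.

Lemma tildeF_bqs_morphism (K H : Gpd) (F : Functor K H) :
  is_bqs_morphism (tildeS K) (tildeS H) (tildeF F).
Proof.
  split.
  - intros s [f ->]. exists (tildeBlock (arr_map F f)). split.
    + exists (arr_map F f). reflexivity.
    + intros m Hm. exact (functor_ldiv F _ _ _ Hm).
  - intros g [x ->]. exists (fob F x). simpl; unfold arr_map; simpl.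
    rewrite fmor_id. reflexivity.
Qed.

Lemma functor_ext_arr (C D : Cat) (F G : Functor C D) :
  (forall x y (f : Hom C x y), arr_map F (mkArr x y f) = arr_map G (mkArr x y f)) ->
  F = G.
Proof.
  intro e.
  assert (eo : fob F = fob G).
  { apply functional_extensionality; intro x.
    exact (f_equal (@asrc D) (e x x (idm x))). }
  destruct F as [p pm pi pc], G as [q qm qi qc]; simpl in *. subst q.
  assert (em : pm = qm).
  { do 3 (apply functional_extensionality_dep; intro).
    apply mkArr_inj, e. }
  subst qm. f_equal; apply proof_irrelevance.
Qed.

Lemma tildeF_injective (K H : Gpd) (F G : Functor K H) :
  tildeF F = tildeF G -> F = G.
Proof.
  intro e. apply functor_ext_arr. intros x y f.
  exact (f_equal (fun P : Functor (tildeCat K) (tildeCat H) => fob P (mkArr x y f)) e).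
Qed.

(* Arrows of S~(H) are propositions, so functors into it are determined by
   their object part. *)
Lemma tilde_functor_ext (K H : Gpd) (P Q : Functor (tildeCat K) (tildeCat H)) :
  fob P = fob Q -> P = Q.
Proof.
  destruct P as [p pm pi pc], Q as [q qm qi qc]; simpl. intro e. subst q.
  assert (em : pm = qm).
  { apply functional_extensionality_dep; intro g.
    apply functional_extensionality_dep; intro h.
    apply functional_extensionality_dep; intro gh.
    exact (proof_irrelevance (atgt (p h) = atgt (p g)) _ _). }
  subst qm. f_equal; apply proof_irrelevance.
Qed.

Section Fullness.
Variables K H : Gpd.
Variable Phi : Functor (tildeCat K) (tildeCat H).
Hypothesis Phi_morphism : is_bqs_morphism (tildeS K) (tildeS H) Phi.

Let P : Arr K -> Arr H := fob Phi.

Lemma Phi_base x : exists y, P (mkArr x x (idm x)) = mkArr y y (idm y).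
Proof.
  destruct (proj2 Phi_morphism (mkArr x x (idm x))) as [y Hy].
  - exists x. reflexivity.
  - exists y. exact Hy.
Qed.

Definition Fob (x : Ob K) : Ob H :=
  proj1_sig (constructive_indefinite_description _ (Phi_base x)).

Lemma Phi_idm x : P (mkArr x x (idm x)) = mkArr (Fob x) (Fob x) (idm (Fob x)).
Proof. exact (proj2_sig (constructive_indefinite_description _ (Phi_base x))). Qed.

(* Block preservation, with the quotient pinned down to Phi(f) by the
   instance (1_y, f, f). *)
Lemma Phi_ldiv (k l f : Arr K) : ldiv k l f -> ldiv (P k) (P l) (P f).
Proof.
  assert (block : exists f', forall k l, ldiv k l f -> ldiv (P k) (P l) f').
  { destruct (proj1 Phi_morphism (tildeBlock f)) as [t [[f' ->] Ht]].
    - exists f. reflexivity.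
    - exists f'. intros k' l' D.
      assert (et : atgt k' = atgt l').
      { destruct D as (a & b & c & k'' & l'' & el & ek & _). subst. reflexivity. }
      exact (Ht (@mkArr (tildeCat K) l' k' et) D). }
  destruct block as [f' Hf']. destruct f as [x y f].
  replace (P (mkArr x y f)) with f'; [apply Hf'|].
  apply (ldiv_idm_l_inv H (Fob y)). rewrite <- Phi_idm.
  apply Hf', ldiv_idm_l.
Qed.

Lemma Phi_arrow {x y} (f : Hom K x y) :
  exists h, P (mkArr x y f) = mkArr (Fob x) (Fob y) h.
Proof.
  assert (es : asrc (P (mkArr x y f)) = Fob x).
  { apply (ldiv_idm_r_inv H (Fob x) (P (mkArr y x (ginv f)))).
    rewrite <- Phi_idm. apply Phi_ldiv, ldiv_idm_r. }
  assert (et : atgt (P (mkArr x y f)) = Fob y).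
  { pose proof (@fmor _ _ Phi (mkArr y y (idm y)) (mkArr x y f) eq_refl) as e.
    change (atgt (P (mkArr x y f)) = atgt (P (mkArr y y (idm y)))) in e.
    rewrite e, Phi_idm. reflexivity. }
  destruct (P (mkArr x y f)) as [s t h]; simpl in *. subst. exists h. reflexivity.
Qed.

Definition Fmor {x y} (f : Hom K x y) : Hom H (Fob x) (Fob y) :=
  proj1_sig (constructive_indefinite_description _ (Phi_arrow f)).

Lemma Phi_mkArr {x y} (f : Hom K x y) :
  P (mkArr x y f) = mkArr (Fob x) (Fob y) (Fmor f).
Proof. exact (proj2_sig (constructive_indefinite_description _ (Phi_arrow f))). Qed.

(* F on objects and arrows, read off Phi; functoriality comes from the
   instance (g, g f, f) of ldiv. *)
Definition Phi_functor : Functor K H.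
Proof.
  refine (mkFunctor K H Fob (@Fmor) _ _).
  - intro x. apply mkArr_inj. rewrite <- Phi_mkArr. apply Phi_idm.
  - intros x y z g f. apply (ldiv_comp_inv H (Fob y) (Fob x) (Fob z)).
    rewrite <- !Phi_mkArr. apply Phi_ldiv, ldiv_comp.
Defined.

Lemma tildeF_Phi_functor : tildeF Phi_functor = Phi.
Proof.
  apply tilde_functor_ext, functional_extensionality. intros [x y f].
  symmetry. apply Phi_mkArr.
Qed.

End Fullness.

Theorem corollary3p5 (K H : Gpd) :
  (forall F : Functor K H, is_bqs_morphism (tildeS K) (tildeS H) (tildeF F)) /\
  (forall F G : Functor K H, tildeF F = tildeF G -> F = G) /\
  (forall Phi : Functor (tildeCat K) (tildeCat H),
      is_bqs_morphism (tildeS K) (tildeS H) Phi ->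
      exists F : Functor K H, tildeF F = Phi).
Proof.
  split; [| split].
  - apply tildeF_bqs_morphism.
  - apply tildeF_injective.
  - intros Phi HPhi. exists (Phi_functor _ _ _ HPhi). apply tildeF_Phi_functor.
Qed.
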